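(* Let $0.8<t<1$, $P=(0,t)$, $Q=(0,-t)$, and let $-1<r'<\frac{t-1}{t+1}$, $R'=(r',0)$. Then $\rho(\psi_{\triangle PQR'})<\frac{2}{5}$.
   Context: $D$ is the open unit disk in $\mathbb R^2$, $S^1$ its boundary circle identified with $\mathbb R/\mathbb Z$ via the counterclockwise normalized angle. For a closed convex $U\subset D$ and $v\in S^1$, $\psi_U(v)$ is the point $w\in S^1\setminus\{v\}$ such that the line $vw$ meets $U$ and $U$ lies in the closed half-plane to the left of the directed line from $v$ to $w$; it is an orientation-preserving homeomorphism of $S^1$; $\triangle PQR'$ denotes the closed filled triangle. For such $f$, $\rho(f)=\lim_{n\to\infty}(\overline f^n(x)-x)/n$ with $\overline f$ the lift to $\mathbb R$ satisfying $\overline f(0)\in[0,1)$. *)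

From Stdlib Require Import Reals Lra.
Open Scope R_scope.

(* Point of the unit circle with counterclockwise normalized angle x
   (S^1 = R/Z). *)
Definition circ (x : R) : (R * R)%type := (cos (2 * PI * x), sin (2 * PI * x)).

Definition cross (a b : (R * R)%type) : R := fst a * snd b - snd a * fst b.
Definition vsub (a b : (R * R)%type) : (R * R)%type := (fst a - fst b, snd a - snd b).

Definition left_of (v w z : (R * R)%type) : Prop := 0 <= cross (vsub w v) (vsub z v).
Definition on_line (v w z : (R * R)%type) : Prop := cross (vsub w v) (vsub z v) = 0.

Definition is_psi (U : (R * R)%type -> Prop) (v w : (R * R)%type) : Prop :=
  w <> v /\ (exists z, U z /\ on_line v w z) /\ (forall z, U z -> left_of v w z).

Definition is_psi_lift (U : (R * R)%type -> Prop) (F : R -> R) : Prop :=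
  (forall x, continuity_pt F x) /\ 0 <= F 0 < 1 /\
  (forall x, is_psi U (circ x) (circ (F x))).

Definition filled_triangle (A B C : (R * R)%type) (z : (R * R)%type) : Prop :=
  exists a b c, 0 <= a /\ 0 <= b /\ 0 <= c /\ a + b + c = 1 /\
    z = (a * fst A + b * fst B + c * fst C, a * snd A + b * snd B + c * snd C).

(* Write the points of the circle as [circ x] and use the half-angle point [half_pt x],
   whose complex square is [circ x]. For [0 < y - x < 1], a point [X] lies to the left of
   the chord from [circ x] to [circ y] iff [0 <= chord_form X (half_pt x) (half_pt y)], a
   form that is bilinear in the half-angle points ([cross_circ]). For a triangle inside the
   disk this makes psi explicit: its lift [psi_lift x] is the largest [y] in [(x, x + 1)]
   for which the three vertices satisfy this condition; it is continuous, nondecreasing and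
   commutes with [x + 1], and every lift [F] with [F 0] in [[0, 1)] equals it.

   The rotation number is then below 2/5 as soon as [psi_lift^5 y < y + 2] for all [y].
   Otherwise the orbit of some [y] gives five admissible chords, each spanning at most half
   a turn (the vertices [(0, t)] and [(0, -t)] forbid longer ones), closing up after two
   turns. After a rotation and an integer shift, each chord joins consecutive half
   circles cut out by the poles [(0, 1)] and [(0, -1)]. In tangent coordinates of the
   offsets from the poles, the vertices [(0, t)] and [(0, -t)] contract by the factor
   [k = (1 - t) / (1 + t) < 1/9], and the vertex [(r', 0)], with [r' < -k], imposes
   conditions that are incompatible with these contractions. *)

From Stdlib Require Import Reals Lra Lia ZArith FunctionalExtensionality.
From Coquelicot Require Import Coquelicot.
Open Scope R_scope.

Lemma periodic_Z {A : Type} (f : R -> A) :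
  (forall x, f (x + 1) = f x) -> forall (n : Z) x, f (x + IZR n) = f x.
Proof.
  intros Hf.
  assert (Hnat : forall (m : nat) x, f (x + INR m) = f x).
  { induction m as [|m IH]; intro x.
    - now rewrite Rplus_0_r.
    - rewrite S_INR, <- (IH x), <- (Hf (x + INR m)). f_equal; ring. }
  intros [|p|p] x.
  - now rewrite Rplus_0_r.
  - rewrite <- positive_nat_Z, <- INR_IZR_INZ. apply Hnat.
  - rewrite <- Pos2Z.opp_pos, opp_IZR, <- positive_nat_Z, <- INR_IZR_INZ.
    rewrite <- (Hnat (Pos.to_nat p) (x + - INR (Pos.to_nat p))). f_equal; ring.
Qed.

Lemma sin_PI_nonneg d : 0 <= d <= 1 -> 0 <= sin (PI * d).
Proof. intro. pose proof PI_RGT_0. apply sin_ge_0; nra. Qed.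

Lemma sin_PI_pos d : 0 < d < 1 -> 0 < sin (PI * d).
Proof. intro. pose proof PI_RGT_0. apply sin_gt_0; nra. Qed.

Lemma cos_PI_pos d : 0 <= d < /2 -> 0 < cos (PI * d).
Proof. intro. pose proof PI_RGT_0. apply cos_gt_0; nra. Qed.

Lemma tan_PI_nonneg d : 0 <= d < /2 -> 0 <= tan (PI * d).
Proof.
  intro Hd. unfold tan. pose proof (cos_PI_pos d Hd). pose proof (sin_PI_nonneg d ltac:(lra)).
  apply Rmult_le_pos; [| left; apply Rinv_0_lt_compat]; assumption.
Qed.

Lemma Un_cv_le_of_multiples (u : nat -> R) l c q : (0 < q)%nat -> Un_cv u l ->
  (forall m, u (S m * q)%nat <= c) -> l <= c.
Proof.
  intros Hq Hu Hc. apply le_epsilon. intros d Hd. destruct (Hu d Hd) as [N HN].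
  specialize (HN (S N * q)%nat ltac:(nia)). unfold Rdist in HN. apply Rabs_def2 in HN as [_ HN].
  pose proof (Hc N). lra.
Qed.

Lemma convex_comb_pos a b c p q r : 0 <= a -> 0 <= b -> 0 <= c -> a + b + c = 1 ->
  0 < p -> 0 < q -> 0 < r -> 0 < a * p + b * q + c * r.
Proof.
  intros Ha Hb Hc Habc Hp Hq Hr.
  assert (0 <= a * p /\ 0 <= b * q /\ 0 <= c * r) as (? & ? & ?) by (repeat split; nra).
  destruct (Rlt_dec 0 a); [nra |]. destruct (Rlt_dec 0 b); [nra |].
  assert (0 < c) by lra. nra.
Qed.

Lemma continuity_pt_Rmax f g x : continuity_pt f x -> continuity_pt g x ->
  continuity_pt (fun y => Rmax (f y) (g y)) x.
Proof.
  intros Hf Hg.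
  apply continuity_pt_ext with (f := ((f + g + comp Rabs (f - g)) * fct_cte (/2))%F).
  { intro y. unfold plus_fct, mult_fct, minus_fct, comp, fct_cte, Rmax.
    destruct (Rle_dec (f y) (g y)); [rewrite Rabs_left1 | rewrite Rabs_right]; lra. }
  apply continuity_pt_mult; [| apply continuity_pt_const; intros u v; reflexivity].
  apply continuity_pt_plus; [apply continuity_pt_plus; assumption |].
  apply continuity_pt_comp; [apply continuity_pt_minus; assumption | apply Rcontinuity_abs].
Qed.

Lemma continuous_Z_valued_const (h : R -> R) : (forall x, continuity_pt h x) ->
  (forall x, exists n : Z, h x = IZR n) -> forall a b, h a = h b.
Proof.
  intros Hc Hint.
  assert (Hle : forall a b, a <= b -> h a = h b).
  { intros a b Hab. destruct (Hint a) as [m Hm], (Hint b) as [n Hn].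
    destruct (Z.eq_dec m n) as [-> | Hmn]; [congruence | exfalso].
    (* a half-integer value strictly between [h a] and [h b] is never taken *)
    set (c := IZR m + if Z_lt_dec m n then /2 else - /2).
    destruct (IVT_cor (fun z => h z - c) a b) as (z & _ & Hz).
    - intro z. apply continuity_pt_minus; [apply Hc |].
      apply continuity_pt_const; intros u v; reflexivity.
    - assumption.
    - rewrite Hm, Hn. unfold c. destruct (Z_lt_dec m n) as [Hlt | Hge].
      + assert (IZR m + 1 <= IZR n) by (rewrite <- plus_IZR; apply IZR_le; lia). nra.
      + assert (IZR n + 1 <= IZR m) by (rewrite <- plus_IZR; apply IZR_le; lia). nra.
    - destruct (Hint z) as [k Hk]. unfold c in Hz.
      destruct (Z_lt_dec m n);
        [assert (E : IZR (2 * k - 2 * m) = IZR 1) | assert (E : IZR (2 * k - 2 * m) = IZR (-1))];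
        try (rewrite minus_IZR, !mult_IZR; simpl; lra);
        apply eq_IZR in E; lia. }
  intros a b. destruct (Rle_dec a b); [apply Hle | symmetry; apply Hle]; lra.
Qed.

(** * Half-angle coordinates *)

Definition half_pt (x : R) : R * R := (cos (PI * x), sin (PI * x)).

Definition chord_form (X u w : R * R) : R :=
  (1 - fst X) * fst u * fst w + (1 + fst X) * snd u * snd w
  - snd X * (snd u * fst w + fst u * snd w).

Lemma chord_form_sym X u w : chord_form X u w = chord_form X w u.
Proof. unfold chord_form; ring. Qed.

Lemma chord_form_half_pt X x y :
  chord_form X (half_pt x) (half_pt y)
  = cos (PI * (y - x)) - fst X * cos (PI * (x + y)) - snd X * sin (PI * (x + y)).
Proof.
  rewrite Rmult_minus_distr_l, !Rmult_plus_distr_l, cos_minus, cos_plus, sin_plus.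
  unfold chord_form, half_pt; simpl; ring.
Qed.

Lemma cross_circ X x y :
  cross (vsub (circ y) (circ x)) (vsub X (circ x))
  = 2 * sin (PI * (y - x)) * chord_form X (half_pt x) (half_pt y).
Proof.
  unfold circ, half_pt.
  replace (2 * PI * x) with (2 * (PI * x)) by ring.
  replace (2 * PI * y) with (2 * (PI * y)) by ring.
  rewrite Rmult_minus_distr_l, sin_minus, !cos_2a, !sin_2a.
  pose proof (sin2_cos2 (PI * x)) as Nx. pose proof (sin2_cos2 (PI * y)) as Ny.
  unfold Rsqr in Nx, Ny.
  set (cx := cos (PI * x)) in *. set (sx := sin (PI * x)) in *.
  set (cy := cos (PI * y)) in *. set (sy := sin (PI * y)) in *.
  destruct X as [p q]. unfold cross, vsub, chord_form; simpl.
  (* both sides agree up to multiples of [1 - |half_pt x|^2] and [1 - |half_pt y|^2] *)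
  apply Rminus_diag_uniq.
  transitivity ((1 - (sx * sx + cx * cx)) * ((cy * cy - sy * sy) * q - 2 * sy * cy * p)
              - (1 - (sy * sy + cy * cy)) * ((cx * cx - sx * sx) * q - 2 * sx * cx * p)).
  - ring.
  - rewrite Nx, Ny. ring.
Qed.

Lemma left_of_circ X x y : 0 < y - x < 1 ->
  left_of (circ x) (circ y) X <-> 0 <= chord_form X (half_pt x) (half_pt y).
Proof.
  intro Hxy. unfold left_of. rewrite cross_circ.
  pose proof (sin_PI_pos (y - x) Hxy). split; intro; nra.
Qed.

Lemma on_line_circ X x y : 0 < y - x < 1 ->
  on_line (circ x) (circ y) X <-> chord_form X (half_pt x) (half_pt y) = 0.
Proof.
  intro Hxy. unfold on_line. rewrite cross_circ.
  pose proof (sin_PI_pos (y - x) Hxy). split; intro E.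
  - apply Rmult_integral in E as [E | E]; lra.
  - rewrite E; ring.
Qed.

Lemma circ_add1 x : circ (x + 1) = circ x.
Proof.
  unfold circ. replace (2 * PI * (x + 1)) with (2 * PI * x + 2 * PI) by ring.
  rewrite cos_plus, sin_plus, cos_2PI, sin_2PI. f_equal; ring.
Qed.

Lemma circ_eq_diff_Z a b : circ a = circ b -> exists n : Z, b - a = IZR n.
Proof.
  intro E. unfold circ in E. injection E as Ec Es.
  assert (Hsin : sin (PI * (b - a)) = 0).
  { assert (Hcos : cos (2 * (PI * (b - a))) = 1).
    { replace (2 * (PI * (b - a))) with (2 * PI * b - 2 * PI * a) by ring.
      rewrite cos_minus, <- Ec, <- Es. pose proof (sin2_cos2 (2 * PI * a)). unfold Rsqr in *. lra. }
    rewrite cos_2a_sin in Hcos. nra. }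
  destruct (sin_eq_0_0 _ Hsin) as [n Hn]. exists n.
  apply (Rmult_eq_reg_l PI); [lra | pose proof PI_RGT_0; lra].
Qed.

Lemma circ_neq_of_sub x y : 0 < y - x < 1 -> circ y <> circ x.
Proof.
  intros Hxy E. destruct (circ_eq_diff_Z y x E) as [n Hn].
  assert (-1 < n < 0)%Z by (split; apply lt_IZR; simpl; lra). lia.
Qed.

Lemma half_pt_add_half x : half_pt (x + /2) = (- snd (half_pt x), fst (half_pt x)).
Proof.
  unfold half_pt; simpl. rewrite Rmult_plus_distr_l, cos_plus, sin_plus.
  replace (PI * /2) with (PI / 2) by reflexivity. rewrite cos_PI2, sin_PI2.
  f_equal; ring.
Qed.

Lemma chord_form_add_half X x y :
  chord_form X (half_pt (x + /2)) (half_pt (y + /2))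
  = chord_form (- fst X, - snd X) (half_pt x) (half_pt y).
Proof. rewrite !half_pt_add_half. unfold chord_form; simpl; ring. Qed.

Lemma chord_form_add1 X x y :
  chord_form X (half_pt (x + 1)) (half_pt (y + 1)) = chord_form X (half_pt x) (half_pt y).
Proof.
  replace (x + 1) with (x + /2 + /2) by field. replace (y + 1) with (y + /2 + /2) by field.
  rewrite !chord_form_add_half. destruct X; simpl. rewrite !Ropp_involutive. reflexivity.
Qed.

Lemma chord_form_add_Z X (n : Z) x y :
  chord_form X (half_pt (x + IZR n)) (half_pt (y + IZR n)) = chord_form X (half_pt x) (half_pt y).
Proof.
  pose (f z := chord_form X (half_pt z) (half_pt (z + (y - x)))).
  assert (Hf : forall z, f (z + 1) = f z).
  { intro z. unfold f. rewrite <- (chord_form_add1 X z).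
    replace (z + (y - x) + 1) with (z + 1 + (y - x)) by ring. reflexivity. }
  pose proof (periodic_Z f Hf n x) as E. unfold f in E.
  replace (x + (y - x)) with y in E by ring.
  replace (y + IZR n) with (x + IZR n + (y - x)) by ring. exact E.
Qed.

Lemma chord_form_interpolate X u a g b :
  sin (PI * (b - a)) * chord_form X u (half_pt g)
  = sin (PI * (b - g)) * chord_form X u (half_pt a)
    + sin (PI * (g - a)) * chord_form X u (half_pt b).
Proof. rewrite !Rmult_minus_distr_l, !sin_minus. unfold chord_form, half_pt; simpl; ring. Qed.

Lemma chord_form_arc_nonneg X u a g b : a <= g <= b -> b - a < 1 ->
  0 <= chord_form X u (half_pt a) -> 0 <= chord_form X u (half_pt b) ->
  0 <= chord_form X u (half_pt g).
Proof.
  intros Hg Hab Ha Hb. destruct (Req_dec a b) as [<- | Hne].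
  - replace g with a by lra. exact Ha.
  - pose proof (chord_form_interpolate X u a g b) as E.
    pose proof (sin_PI_pos (b - a) ltac:(lra)).
    pose proof (sin_PI_nonneg (b - g) ltac:(lra)). pose proof (sin_PI_nonneg (g - a) ltac:(lra)).
    nra.
Qed.

Lemma chord_form_arc_pos X u a g b : a <= g < b -> b - a < 1 ->
  0 < chord_form X u (half_pt a) -> 0 <= chord_form X u (half_pt b) ->
  0 < chord_form X u (half_pt g).
Proof.
  intros Hg Hab Ha Hb. pose proof (chord_form_interpolate X u a g b) as E.
  pose proof (sin_PI_pos (b - a) ltac:(lra)).
  pose proof (sin_PI_pos (b - g) ltac:(lra)). pose proof (sin_PI_nonneg (g - a) ltac:(lra)).
  nra.
Qed.

Definition in_open_disk (X : R * R) : Prop := fst X * fst X + snd X * snd X < 1.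

Lemma chord_form_diag_pos X x : in_open_disk X -> 0 < chord_form X (half_pt x) (half_pt x).
Proof.
  unfold in_open_disk. intro HX. rewrite chord_form_half_pt, Rminus_diag, Rmult_0_r, cos_0.
  pose proof (sin2_cos2 (PI * (x + x))). unfold Rsqr in *.
  (* [2 X.w <= |X|^2 + |w|^2 < 2] for the unit vector [w] *)
  pose proof (Rle_0_sqr (fst X - cos (PI * (x + x)))).
  pose proof (Rle_0_sqr (snd X - sin (PI * (x + x)))). unfold Rsqr in *.
  nra.
Qed.

Lemma cross_filled_triangle A B C v w z : filled_triangle A B C z ->
  exists a b c, 0 <= a /\ 0 <= b /\ 0 <= c /\ a + b + c = 1 /\
    cross (vsub w v) (vsub z v)
    = a * cross (vsub w v) (vsub A v) + b * cross (vsub w v) (vsub B v)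
      + c * cross (vsub w v) (vsub C v).
Proof.
  intros (a & b & c & Ha & Hb & Hc & Habc & ->). exists a, b, c.
  do 4 (split; [assumption |]).
  replace c with (1 - a - b) by lra. unfold cross, vsub; simpl. ring.
Qed.

Definition slope (X : R * R) (x : R) : R :=
  - chord_form X (half_pt x) (half_pt (x + /2)) / chord_form X (half_pt x) (half_pt x).

Lemma chord_form_rotated X x k : chord_form X (half_pt x) (half_pt x) <> 0 ->
  chord_form X (half_pt x) (half_pt (x + /2 - atan k / PI))
  = chord_form X (half_pt x) (half_pt x) * (k - slope X x) / sqrt (1 + k²).
Proof.
  intro Hd. assert (Hs : 0 < sqrt (1 + k²)) by (apply sqrt_lt_R0; pose proof (Rle_0_sqr k); lra).
  replace (x + /2 - atan k / PI) with (x - atan k / PI + /2) by ring.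
  unfold slope. rewrite !half_pt_add_half.
  unfold half_pt; simpl.
  replace (PI * (x - atan k / PI)) with (PI * x - atan k) by (field; apply PI_neq0).
  rewrite cos_minus, sin_minus, cos_atan, sin_atan.
  unfold chord_form in *; simpl in *. field. split; lra.
Qed.

Lemma slope_add1 X x : slope X (x + 1) = slope X x.
Proof.
  unfold slope. replace (x + 1 + /2) with (x + /2 + 1) by ring.
  rewrite !chord_form_add1. reflexivity.
Qed.

Lemma continuity_pt_slope X x : in_open_disk X -> continuity_pt (slope X) x.
Proof.
  intro HX. pose proof (chord_form_diag_pos X x HX) as Hd.
  apply continuity_pt_filterlim, (ex_derive_continuous (slope X)).
  unfold slope, chord_form, half_pt in *; simpl in *. auto_derive. lra.
Qed.

(** * The lift of psi for a triangle *)

Definition tri_vertex (A B C X : R * R) : Prop := X = A \/ X = B \/ X = C.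

Section TriangleLift.

Variables A B C : R * R.
Hypotheses (HA : in_open_disk A) (HB : in_open_disk B) (HC : in_open_disk C).

Definition admissible (x y : R) : Prop :=
  forall X, tri_vertex A B C X -> 0 <= chord_form X (half_pt x) (half_pt y).

Definition max_slope (x : R) : R := Rmax (slope A x) (Rmax (slope B x) (slope C x)).

(* By [chord_form_rotated], the chord from [x] to [x + /2 - atan k / PI] keeps the vertex
   [X] on its left iff [slope X x <= k]. *)
Definition psi_lift (x : R) : R := x + /2 - atan (max_slope x) / PI.

Lemma vertex_chord_form_diag_pos X x : tri_vertex A B C X ->
  0 < chord_form X (half_pt x) (half_pt x).
Proof. intros [-> | [-> | ->]]; apply chord_form_diag_pos; assumption. Qed.

Lemma slope_le_max_slope X x : tri_vertex A B C X -> slope X x <= max_slope x.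
Proof.
  unfold max_slope. intros [-> | [-> | ->]].
  - apply Rmax_l.
  - eapply Rle_trans; [apply Rmax_l | apply Rmax_r].
  - eapply Rle_trans; [apply Rmax_r | apply Rmax_r].
Qed.

Lemma max_slope_attained x : exists X, tri_vertex A B C X /\ max_slope x = slope X x.
Proof.
  unfold max_slope, tri_vertex.
  apply Rmax_case; [| apply Rmax_case]; eauto 6.
Qed.

Lemma psi_lift_sub x : 0 < psi_lift x - x < 1.
Proof.
  unfold psi_lift. pose proof (atan_bound (max_slope x)). pose proof PI_RGT_0.
  assert (- /2 < atan (max_slope x) / PI < /2).
  { split; [apply (Rmult_lt_reg_r PI) | apply (Rmult_lt_reg_r PI)]; try lra;
      unfold Rdiv; rewrite Rmult_assoc, Rinv_l; lra. }
  lra.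
Qed.

Lemma chord_form_psi_lift X x : tri_vertex A B C X ->
  chord_form X (half_pt x) (half_pt (psi_lift x))
  = chord_form X (half_pt x) (half_pt x) * (max_slope x - slope X x) / sqrt (1 + (max_slope x)²).
Proof.
  intro HX. apply chord_form_rotated.
  pose proof (vertex_chord_form_diag_pos X x HX). lra.
Qed.

Lemma admissible_psi_lift x : admissible x (psi_lift x).
Proof.
  intros X HX. rewrite chord_form_psi_lift by assumption.
  pose proof (vertex_chord_form_diag_pos X x HX). pose proof (slope_le_max_slope X x HX).
  assert (0 < sqrt (1 + (max_slope x)²))
    by (apply sqrt_lt_R0; pose proof (Rle_0_sqr (max_slope x)); lra).
  apply Rmult_le_pos; [nra | left; apply Rinv_0_lt_compat; assumption].
Qed.

Lemma psi_lift_tight x :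
  exists X, tri_vertex A B C X /\ chord_form X (half_pt x) (half_pt (psi_lift x)) = 0.
Proof.
  destruct (max_slope_attained x) as (X & HX & E). exists X. split; [assumption |].
  rewrite chord_form_psi_lift, E by assumption. unfold Rdiv. ring.
Qed.

Lemma admissible_le_psi_lift x y : x < y < x + 1 -> admissible x y -> y <= psi_lift x.
Proof.
  intros Hy Hadm. apply Rnot_lt_le. intro Hlt.
  pose proof (psi_lift_sub x). destruct (psi_lift_tight x) as (X & HX & E).
  assert (0 < chord_form X (half_pt x) (half_pt (psi_lift x))).
  { apply chord_form_arc_pos with x y; try lra.
    - apply vertex_chord_form_diag_pos; assumption.
    - apply Hadm; assumption. }
  lra.
Qed.

Lemma admissible_sub_left x y w : x <= y <= w -> w - x < 1 -> admissible x w -> admissible y w.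
Proof.
  intros Hy Hw Hadm X HX. rewrite chord_form_sym.
  apply chord_form_arc_nonneg with x w; try lra.
  - rewrite chord_form_sym. apply Hadm; assumption.
  - left. apply vertex_chord_form_diag_pos; assumption.
Qed.

Lemma admissible_sub_right x y w : x <= y <= w -> w - x < 1 -> admissible x w -> admissible x y.
Proof.
  intros Hy Hw Hadm X HX. apply chord_form_arc_nonneg with x w; try lra.
  - left. apply vertex_chord_form_diag_pos; assumption.
  - apply Hadm; assumption.
Qed.

Lemma psi_lift_nondecreasing x y : x <= y -> psi_lift x <= psi_lift y.
Proof.
  intro Hxy. pose proof (psi_lift_sub x). pose proof (psi_lift_sub y).
  destruct (Rle_lt_dec (psi_lift x) y); [lra |].
  apply admissible_le_psi_lift; [lra |].
  apply admissible_sub_left with x; [lra | lra | apply admissible_psi_lift].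
Qed.

Lemma psi_lift_add1 x : psi_lift (x + 1) = psi_lift x + 1.
Proof. unfold psi_lift, max_slope. rewrite !slope_add1. ring. Qed.

Lemma psi_lift_continuous x : continuity_pt psi_lift x.
Proof.
  assert (HK : continuity_pt max_slope x).
  { unfold max_slope.
    apply continuity_pt_Rmax; [| apply continuity_pt_Rmax]; apply continuity_pt_slope; assumption. }
  apply continuity_pt_ext with (f := (id + fct_cte (/2) - comp atan max_slope * fct_cte (/PI))%F).
  { intro y. unfold psi_lift, plus_fct, mult_fct, minus_fct, comp, fct_cte, id, Rdiv. ring. }
  apply continuity_pt_minus; [apply continuity_pt_plus |].
  - apply derivable_continuous_pt, derivable_pt_id.
  - apply continuity_pt_const; intros u v; reflexivity.
  - apply continuity_pt_mult; [| apply continuity_pt_const; intros u v; reflexivity].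
    apply continuity_pt_comp; [assumption | apply derivable_continuous_pt, derivable_pt_atan].
Qed.

Lemma vertex_in_filled_triangle X : tri_vertex A B C X -> filled_triangle A B C X.
Proof.
  intros [-> | [-> | ->]]; [exists 1, 0, 0 | exists 0, 1, 0 | exists 0, 0, 1];
    repeat split; try lra; destruct A, B, C; simpl; f_equal; ring.
Qed.

Lemma is_psi_psi_lift x : is_psi (filled_triangle A B C) (circ x) (circ (psi_lift x)).
Proof.
  pose proof (psi_lift_sub x) as Hsub. split; [| split].
  - apply circ_neq_of_sub; assumption.
  - destruct (psi_lift_tight x) as (X & HX & E). exists X. split.
    + apply vertex_in_filled_triangle; assumption.
    + apply on_line_circ; assumption.
  - intros z Hz. unfold left_of.
    destruct (cross_filled_triangle A B C (circ x) (circ (psi_lift x)) z Hz)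
      as (a & b & c & Ha & Hb & Hc & _ & ->).
    assert (Hv : forall X, tri_vertex A B C X ->
      0 <= cross (vsub (circ (psi_lift x)) (circ x)) (vsub X (circ x))).
    { intros X HX. apply left_of_circ; [assumption | apply admissible_psi_lift; assumption]. }
    pose proof (Hv A (or_introl eq_refl)). pose proof (Hv B (or_intror (or_introl eq_refl))).
    pose proof (Hv C (or_intror (or_intror eq_refl))). nra.
Qed.

Lemma is_psi_eq_psi_lift x y : x < y < x + 1 ->
  is_psi (filled_triangle A B C) (circ x) (circ y) -> y = psi_lift x.
Proof.
  intros Hy (_ & (z & Hz & Hon) & Hleft).
  assert (Hadm : admissible x y).
  { intros X HX. apply (left_of_circ X x y); [lra |].
    apply Hleft, vertex_in_filled_triangle; assumption. }
  pose proof (admissible_le_psi_lift x y Hy Hadm) as Hle. pose proof (psi_lift_sub x).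
  destruct (Req_dec y (psi_lift x)) as [| Hne]; [assumption | exfalso].
  (* below [psi_lift x] every vertex lies strictly left of the chord, so no point of the
     triangle is on it *)
  assert (Hpos : forall X, tri_vertex A B C X ->
    0 < cross (vsub (circ y) (circ x)) (vsub X (circ x))).
  { intros X HX. rewrite cross_circ. apply Rmult_lt_0_compat.
    - pose proof (sin_PI_pos (y - x) ltac:(lra)). lra.
    - apply chord_form_arc_pos with x (psi_lift x); try lra.
      + apply vertex_chord_form_diag_pos; assumption.
      + apply admissible_psi_lift; assumption. }
  unfold on_line in Hon.
  destruct (cross_filled_triangle A B C (circ x) (circ y) z Hz)
    as (a & b & c & Ha & Hb & Hc & Habc & E).
  rewrite E in Hon.
  pose proof (convex_comb_pos a b c _ _ _ Ha Hb Hc Habc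
    (Hpos A (or_introl eq_refl)) (Hpos B (or_intror (or_introl eq_refl)))
    (Hpos C (or_intror (or_intror eq_refl)))).
  lra.
Qed.

Lemma is_psi_sub_psi_lift_Z x w : is_psi (filled_triangle A B C) (circ x) (circ w) ->
  exists n : Z, w - psi_lift x = IZR n.
Proof.
  intro Hpsi. destruct (archimed (w - x)) as [Hup1 Hup2].
  (* [y] is the representative of [w] modulo 1 in [[x, x + 1)] *)
  set (n := (up (w - x) - 1)%Z). set (y := w - IZR n).
  assert (Hn : IZR n = IZR (up (w - x)) - 1) by (unfold n; rewrite minus_IZR; reflexivity).
  assert (Ey : circ y = circ w).
  { rewrite <- (periodic_Z circ circ_add1 (- n) w), opp_IZR. reflexivity. }
  rewrite <- Ey in Hpsi. pose proof (proj1 Hpsi) as Hne.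
  assert (Hyx : x < y < x + 1).
  { split; [| unfold y; lra].
    destruct (Req_dec y x) as [E | E]; [rewrite E in Hne; contradiction | unfold y in *; lra]. }
  exists n. rewrite <- (is_psi_eq_psi_lift x y Hyx Hpsi). unfold y. ring.
Qed.

Lemma lift_eq_psi_lift F : is_psi_lift (filled_triangle A B C) F -> F = psi_lift.
Proof.
  intros (HFc & HF0 & HFpsi).
  assert (Hint : forall x, exists n : Z, F x - psi_lift x = IZR n)
    by (intro x; apply is_psi_sub_psi_lift_Z, HFpsi).
  assert (Hconst := continuous_Z_valued_const (fun x => F x - psi_lift x)
    (fun x => continuity_pt_minus _ _ x (HFc x) (psi_lift_continuous x)) Hint).
  assert (Hzero : F 0 - psi_lift 0 = 0).
  { destruct (Hint 0) as [n Hn]. pose proof (psi_lift_sub 0).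
    assert (n = 0%Z) as -> by (assert (-1 < n < 1)%Z by (split; apply lt_IZR; simpl; lra); lia).
    exact Hn. }
  apply functional_extensionality. intro x.
  pose proof (Hconst x 0). simpl in *. lra.
Qed.

Lemma is_psi_lift_psi_lift : is_psi_lift (filled_triangle A B C) psi_lift.
Proof.
  split; [| split].
  - exact psi_lift_continuous.
  - pose proof (psi_lift_sub 0). lra.
  - exact is_psi_psi_lift.
Qed.

End TriangleLift.

Lemma admissible_add_Z A B C (n : Z) x y :
  admissible A B C x y -> admissible A B C (x + IZR n) (y + IZR n).
Proof. intros Hadm X HX. rewrite chord_form_add_Z. apply Hadm; assumption. Qed.

(** * Rotation numbers *)

Section RotationNumber.

Variable g : R -> R.
Hypothesis g_add1 : forall x, g (x + 1) = g x + 1.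
Hypothesis g_nondecreasing : forall x y, x <= y -> g x <= g y.
Hypothesis g_continuous : forall x, continuity_pt g x.

Definition displacement (n : nat) (x : R) : R := Nat.iter n g x - x.

Lemma iter_add1 n x : Nat.iter n g (x + 1) = Nat.iter n g x + 1.
Proof. induction n as [| n IH]; [reflexivity |]. simpl. rewrite IH. apply g_add1. Qed.

Lemma iter_nondecreasing n x y : x <= y -> Nat.iter n g x <= Nat.iter n g y.
Proof. intro. induction n as [| n IH]; simpl; [assumption | apply g_nondecreasing, IH]. Qed.

Lemma iter_continuous n x : continuity_pt (Nat.iter n g) x.
Proof.
  revert x. induction n as [| n IH]; intro x.
  - apply derivable_continuous_pt, derivable_pt_id.
  - apply (continuity_pt_comp (Nat.iter n g) g); [apply IH | apply g_continuous].
Qed.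

Lemma displacement_add_Z n (k : Z) x : displacement n (x + IZR k) = displacement n x.
Proof.
  apply (periodic_Z (displacement n)). intro y. unfold displacement. rewrite iter_add1. ring.
Qed.

Lemma displacement_add m n x :
  displacement (m + n) x = displacement m (Nat.iter n g x) + displacement n x.
Proof. unfold displacement. rewrite Nat.iter_add. ring. Qed.

Lemma displacement_close n x y : Rabs (displacement n x - displacement n y) <= 1.
Proof.
  destruct (archimed (x - y)) as [Hup1 Hup2].
  rewrite <- (displacement_add_Z n (up (x - y)) y).
  set (y' := y + IZR (up (x - y))).
  pose proof (iter_nondecreasing n x y' ltac:(unfold y'; lra)).
  pose proof (iter_nondecreasing n y' (x + 1) ltac:(unfold y'; lra)).
  rewrite iter_add1 in *. unfold displacement. apply Rabs_le. unfold y' in *. lra.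
Qed.

Lemma displacement_mul k n x : Rabs (displacement (k * n) x - INR k * displacement n x) <= INR k.
Proof.
  induction k as [| k IH].
  - unfold displacement. simpl. apply Rabs_le. lra.
  - replace (S k * n)%nat with (n + k * n)%nat by lia. rewrite displacement_add, S_INR.
    pose proof (displacement_close n (Nat.iter (k * n) g x) x) as Hclose.
    apply Rabs_le_between in IH, Hclose. apply Rabs_le. unfold displacement in *. lra.
Qed.

Lemma displacement_ratio_close x m n : (0 < m)%nat -> (0 < n)%nat ->
  Rabs (displacement n x / INR n - displacement m x / INR m) <= / INR n + / INR m.
Proof.
  intros Hm Hn.
  assert (0 < INR m) by (apply lt_0_INR; lia). assert (0 < INR n) by (apply lt_0_INR; lia).
  pose proof (displacement_mul m n x) as Hmn. pose proof (displacement_mul n m x) as Hnm.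
  rewrite Nat.mul_comm in Hnm. apply Rabs_le_between in Hmn, Hnm.
  replace (displacement n x / INR n - displacement m x / INR m)
    with ((INR m * displacement n x - INR n * displacement m x) / (INR n * INR m)) by (field; lra).
  replace (/ INR n + / INR m) with ((INR m + INR n) / (INR n * INR m)) by (field; lra).
  rewrite Rabs_div by nra. rewrite (Rabs_right (INR n * INR m)) by nra.
  apply Rmult_le_compat_r; [left; apply Rinv_0_lt_compat; nra |]. apply Rabs_le. lra.
Qed.

Lemma rotation_number_exists x : exists rho, Un_cv (fun n => displacement n x / INR n) rho.
Proof.
  assert (Hcauchy : Cauchy_crit (fun n => displacement n x / INR n)).
  2:{ destruct (Rcomplete.R_complete _ Hcauchy) as [rho Hrho]. exists rho. exact Hrho. }
  intros eps Heps.
  destruct (archimed_cor1 (eps / 2)) as (N & HN & HN0); [lra |].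
  exists N. intros n m Hn Hm. unfold Rdist.
  assert (0 < INR N) by (apply lt_0_INR; lia).
  assert (/ INR n <= / INR N) by (apply Rinv_le_contravar; [lra | apply le_INR; lia]).
  assert (/ INR m <= / INR N) by (apply Rinv_le_contravar; [lra | apply le_INR; lia]).
  pose proof (displacement_ratio_close x m n ltac:(lia) ltac:(lia)). lra.
Qed.

Lemma displacement_uniform_gap p q : (forall y, Nat.iter q g y < y + p) ->
  exists eps, 0 < eps /\ forall y, displacement q y <= p - eps.
Proof.
  intro Hq.
  (* [displacement q] is 1-periodic, so its maximum over [[0, 1]] is a global maximum *)
  destruct (continuity_ab_maj (displacement q) 0 1) as (M & HM & HM01); [lra | |].
  { intros c _. apply continuity_pt_minus;
      [apply iter_continuous | apply derivable_continuous_pt, derivable_pt_id]. }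
  exists (p - displacement q M). split; [unfold displacement; pose proof (Hq M); lra |].
  intro y. destruct (archimed (- y)) as [Hup1 Hup2].
  rewrite <- (displacement_add_Z q (up (- y)) y).
  pose proof (HM (y + IZR (up (- y))) ltac:(lra)). lra.
Qed.

Lemma rotation_number_lt p q x rho : (0 < q)%nat -> (forall y, Nat.iter q g y < y + p) ->
  Un_cv (fun n => displacement n x / INR n) rho -> rho < p / INR q.
Proof.
  intros Hq Hlt Hrho. assert (0 < INR q) by (apply lt_0_INR; lia).
  destruct (displacement_uniform_gap p q Hlt) as (eps & Heps & Hgap).
  assert (Hblock : forall m, displacement (m * q) x <= INR m * (p - eps)).
  { induction m as [| m IH]; [unfold displacement; simpl; lra |].
    replace (S m * q)%nat with (q + m * q)%nat by lia.
    rewrite displacement_add, S_INR. pose proof (Hgap (Nat.iter (m * q) g x)). lra. }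
  assert (Hle : rho <= (p - eps) / INR q).
  { apply (Un_cv_le_of_multiples _ _ _ q Hq Hrho). intro m.
    rewrite mult_INR. pose proof (Hblock (S m)). pose proof (lt_0_INR (S m) ltac:(lia)).
    apply (Rmult_le_reg_r (INR (S m) * INR q)); [nra |].
    replace (displacement (S m * q) x / (INR (S m) * INR q) * (INR (S m) * INR q))
      with (displacement (S m * q) x) by (field; lra).
    replace ((p - eps) / INR q * (INR (S m) * INR q)) with (INR (S m) * (p - eps)) by (field; lra).
    assumption. }
  apply (Rle_lt_trans _ _ _ Hle). apply Rmult_lt_compat_r; [apply Rinv_0_lt_compat |]; lra.
Qed.

End RotationNumber.

(** * Tangent coordinates on half circles *)

(* [/4 + n] and [3/4 + n] lift the poles [(0, 1)] and [(0, -1)]. A point [g + d] of the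
   half circle following a pole [g], with [0 <= d < /2], is recorded by [tan (PI * d)]. *)
Lemma chord_form_north_south_tan X d d' : 0 <= d < /2 -> 0 <= d' < /2 ->
  chord_form X (half_pt (/4 + d)) (half_pt (3/4 + d'))
  = cos (PI * d) * cos (PI * d') *
    (tan (PI * d) - tan (PI * d') + fst X * (1 - tan (PI * d) * tan (PI * d'))
     + snd X * (tan (PI * d) + tan (PI * d'))).
Proof.
  intros Hd Hd'. pose proof (cos_PI_pos d Hd). pose proof (cos_PI_pos d' Hd').
  rewrite chord_form_half_pt.
  replace (PI * (3/4 + d' - (/4 + d))) with (PI / 2 + (PI * d' - PI * d)) by field.
  replace (PI * (/4 + d + (3/4 + d'))) with (PI + (PI * d + PI * d')) by field.
  repeat rewrite ?cos_plus, ?sin_plus, ?cos_minus, ?sin_minus.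
  rewrite cos_PI2, sin_PI2, cos_PI, sin_PI.
  unfold tan. field. split; lra.
Qed.

Lemma chord_form_north_north_tan X d d' : 0 <= d < /2 -> 0 <= d' < /2 ->
  chord_form X (half_pt (/4 + d)) (half_pt (/4 + d'))
  = cos (PI * d) * cos (PI * d') *
    (1 + tan (PI * d) * tan (PI * d') + fst X * (tan (PI * d) + tan (PI * d'))
     - snd X * (1 - tan (PI * d) * tan (PI * d'))).
Proof.
  intros Hd Hd'. pose proof (cos_PI_pos d Hd). pose proof (cos_PI_pos d' Hd').
  rewrite chord_form_half_pt.
  replace (PI * (/4 + d' - (/4 + d))) with (PI * d' - PI * d) by field.
  replace (PI * (/4 + d + (/4 + d'))) with (PI / 2 + (PI * d + PI * d')) by field.
  repeat rewrite ?cos_plus, ?sin_plus, ?cos_minus, ?sin_minus.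
  rewrite cos_PI2, sin_PI2.
  unfold tan. field. split; lra.
Qed.

Lemma north_south_chord_tan X (n : Z) x y d d' : x = /4 + d + IZR n -> y = 3/4 + d' + IZR n ->
  0 <= d < /2 -> 0 <= d' < /2 -> 0 <= chord_form X (half_pt x) (half_pt y) ->
  0 <= tan (PI * d) - tan (PI * d') + fst X * (1 - tan (PI * d) * tan (PI * d'))
       + snd X * (tan (PI * d) + tan (PI * d')).
Proof.
  intros -> -> Hd Hd'. rewrite chord_form_add_Z, chord_form_north_south_tan by assumption. intro Hnonneg.
  pose proof (cos_PI_pos d Hd). pose proof (cos_PI_pos d' Hd').
  apply (Rmult_le_reg_l (cos (PI * d) * cos (PI * d'))); [nra | lra].
Qed.

Lemma south_north_chord_tan X (n : Z) x y d d' : x = 3/4 + d + IZR n -> y = 5/4 + d' + IZR n ->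
  0 <= d < /2 -> 0 <= d' < /2 -> 0 <= chord_form X (half_pt x) (half_pt y) ->
  0 <= tan (PI * d) - tan (PI * d') - fst X * (1 - tan (PI * d) * tan (PI * d'))
       - snd X * (tan (PI * d) + tan (PI * d')).
Proof.
  intros -> -> Hd Hd' Hnonneg.
  replace (3/4 + d + IZR n) with (/4 + d + IZR n + /2) in Hnonneg by field.
  replace (5/4 + d' + IZR n) with (3/4 + d' + IZR n + /2) in Hnonneg by field.
  rewrite chord_form_add_half in Hnonneg.
  pose proof (north_south_chord_tan _ n _ _ d d' eq_refl eq_refl Hd Hd' Hnonneg). simpl in *. lra.
Qed.

Lemma north_north_chord_tan X (n : Z) x y d d' : x = /4 + d + IZR n -> y = /4 + d' + IZR n ->
  0 <= d < /2 -> 0 <= d' < /2 -> 0 <= chord_form X (half_pt x) (half_pt y) ->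
  0 <= 1 + tan (PI * d) * tan (PI * d') + fst X * (tan (PI * d) + tan (PI * d'))
       - snd X * (1 - tan (PI * d) * tan (PI * d')).
Proof.
  intros -> -> Hd Hd'. rewrite chord_form_add_Z, chord_form_north_north_tan by assumption. intro Hnonneg.
  pose proof (cos_PI_pos d Hd). pose proof (cos_PI_pos d' Hd').
  apply (Rmult_le_reg_l (cos (PI * d) * cos (PI * d'))); [nra | lra].
Qed.

Lemma tan_contract t T T' : -1 < t -> 0 <= T - T' - t * (T + T') -> T' <= (1 - t) / (1 + t) * T.
Proof.
  intros Ht Hnonneg. apply (Rmult_le_reg_l (1 + t)); [lra |].
  replace ((1 + t) * ((1 - t) / (1 + t) * T)) with ((1 - t) * T) by (field; lra). lra.
Qed.

Lemma tan_chain_short_absurd k p W T0 T1 T2 T3 : 0 < k < p -> p < 1 -> 0 <= W -> 0 <= T3 ->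
  0 <= W - T0 + p * (1 - W * T0) -> T1 <= k * T0 -> T2 <= k * T1 ->
  0 <= T2 - T3 - p * (1 - T2 * T3) -> False.
Proof.
  intros Hk Hp HW HT3 H0 H1 H2 H3.
  assert (HT0 : p * T0 <= 1).
  { apply Rnot_lt_le. intro. assert (0 < T0) by nra. assert (1 < T0) by nra. nra. }
  assert (HT2 : T2 <= k * k * T0) by nra.
  assert (HpT2 : p * T2 <= k * k) by nra.
  assert (T2 < p) by nra.
  assert (0 <= T3 * (1 - p * T2)) by (apply Rmult_le_pos; nra).
  nra.
Qed.

Lemma tan_chain_long_steep_absurd k p W T0 T1 T2 T3 : 0 < k <= /9 -> k < p < 1 ->
  0 <= W -> 0 <= T3 -> 1 < T1 ->
  T0 <= k * W -> T1 <= k * T0 -> T2 <= k * T1 -> T3 <= k * T2 ->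
  0 <= T0 - T1 + p * (1 - T0 * T1) -> 0 <= 1 + T3 * W - p * (T3 + W) -> False.
Proof.
  intros Hk Hp HW HT3 HT1 H0 H1 H2 H3 R1 R4.
  assert (HkT0 : 1 < k * T0) by lra.
  assert (HT0 : 0 < T0) by nra.
  assert (HT01 : 1 < T0 * T1) by nra.
  assert (0 < (p - k) * (T0 * T1 - 1)) by (apply Rmult_lt_0_compat; lra).
  assert (HR1 : k * T0 * T1 < T0 - T1 + k) by nra.
  assert (HW0 : 0 < W) by nra.
  assert (HR4 : W * (k - T3) < 1 - k * T3) by nra.
  assert (HT0T3 : T0 * (k - T3) < k).
  { destruct (Rle_lt_dec (k - T3) 0); [nra |].
    apply Rle_lt_trans with (k * W * (k - T3)); [apply Rmult_le_compat_r; lra | nra]. }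
  assert (HT3T1 : T3 <= k * k * T1) by nra.
  assert (HS : T0 < k * T0 * T1 + 1) by nra.
  assert (T1 < 1 + k) by lra.
  assert (T1 * (1 - k * T1) < k) by nra.
  nra.
Qed.

Lemma tan_chain_long_flat_absurd k p W T0 T1 T2 T3 : 0 < k <= /9 -> k < p < 1 ->
  0 <= W -> 0 <= T2 -> 0 <= T3 -> T1 <= 1 ->
  T0 <= k * W -> T1 <= k * T0 -> T2 <= k * T1 -> T3 <= k * T2 ->
  0 <= T1 - T2 - p * (1 - T1 * T2) -> 0 <= 1 + T3 * W - p * (T3 + W) -> False.
Proof.
  intros Hk Hp HW HT2 HT3 HT1 H0 H1 H2 H3 R2 R4.
  assert (Hv : T2 <= k) by nra.
  assert (Hb : T1 * (1 + k * T2) > k + T2).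
  { assert (0 < (p - k) * (1 - T1 * T2)) by (apply Rmult_lt_0_compat; nra). nra. }
  assert (Hc : W * (k - T3) <= 1 - k * T3).
  { assert (0 <= (p - k) * (T3 + W)) by (apply Rmult_le_pos; lra). nra. }
  assert (Hd : W * k * (1 - T2) <= 1 - k * k * T2).
  { destruct (Rle_lt_dec k W).
    - assert (T3 * (W - k) <= k * T2 * (W - k)) by (apply Rmult_le_compat_r; lra). nra.
    - nra. }
  assert (Hf : T1 * (1 - T2) <= k * (1 - k * k * T2)).
  { assert (T1 <= k * k * W) by nra.
    apply Rle_trans with (k * k * W * (1 - T2)); [apply Rmult_le_compat_r; lra | nra]. }
  assert (Hg : k * (1 - k * k * T2) * (1 + k * T2) <= (k + T2) * (1 - T2)).
  { assert (0 <= T2 * (1 - k - T2 - k * k + k * k * k + k * k * k * k * T2)).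
    { apply Rmult_le_pos; [lra |].
      assert (0 <= k * k * k * k * T2) by (repeat apply Rmult_le_pos; lra). nra. }
    nra. }
  assert (0 < 1 - T2) by lra. assert (0 < 1 + k * T2) by nra.
  assert (T1 * (1 + k * T2) * (1 - T2) > (k + T2) * (1 - T2)) by (apply Rmult_gt_compat_r; lra).
  assert (T1 * (1 - T2) * (1 + k * T2) <= k * (1 - k * k * T2) * (1 + k * T2))
    by (apply Rmult_le_compat_r; lra).
  nra.
Qed.

Lemma tan_chain_long_absurd k p W T0 T1 T2 T3 : 0 < k <= /9 -> k < p < 1 ->
  0 <= W -> 0 <= T2 -> 0 <= T3 ->
  T0 <= k * W -> T1 <= k * T0 -> T2 <= k * T1 -> T3 <= k * T2 ->
  0 <= T0 - T1 + p * (1 - T0 * T1) -> 0 <= T1 - T2 - p * (1 - T1 * T2) ->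
  0 <= 1 + T3 * W - p * (T3 + W) -> False.
Proof.
  intros. destruct (Rle_lt_dec T1 1).
  - apply (tan_chain_long_flat_absurd k p W T0 T1 T2 T3); assumption.
  - apply (tan_chain_long_steep_absurd k p W T0 T1 T2 T3); assumption.
Qed.

(** * Closed chains of admissible chords *)

Definition crossing (b y0 y1 y2 y3 y4 : R) : Prop :=
  b - /2 <= y0 < b /\ b <= y1 /\ b + /2 <= y2 /\ b + 1 <= y3 /\ b + 3/2 <= y4.

Section ClosedChain.

Variable adm : R -> R -> Prop.
Hypothesis adm_add_Z : forall (n : Z) x y, adm x y -> adm (x + IZR n) (y + IZR n).

Definition closed_chain (y0 y1 y2 y3 y4 : R) : Prop :=
  y0 <= y1 <= y0 + /2 /\ y1 <= y2 <= y1 + /2 /\ y2 <= y3 <= y2 + /2 /\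
  y3 <= y4 <= y3 + /2 /\ y4 <= y0 + 2 <= y4 + /2 /\
  adm y0 y1 /\ adm y1 y2 /\ adm y2 y3 /\ adm y3 y4 /\ adm y4 (y0 + 2).

Lemma closed_chain_rotate y0 y1 y2 y3 y4 :
  closed_chain y0 y1 y2 y3 y4 -> closed_chain y1 y2 y3 y4 (y0 + 2).
Proof.
  intros (? & ? & ? & ? & ? & ? & ? & ? & ? & ?).
  repeat split; try lra; try assumption. apply (adm_add_Z 2); assumption.
Qed.

Lemma closed_chain_add_Z (n : Z) y0 y1 y2 y3 y4 : closed_chain y0 y1 y2 y3 y4 ->
  closed_chain (y0 + IZR n) (y1 + IZR n) (y2 + IZR n) (y3 + IZR n) (y4 + IZR n).
Proof.
  intros (? & ? & ? & ? & ? & ? & ? & ? & ? & ?).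
  repeat split; try lra; try (apply adm_add_Z; assumption).
  replace (y0 + IZR n + 2) with (y0 + 2 + IZR n) by ring. apply adm_add_Z; assumption.
Qed.

Lemma closed_chain_crossing y0 y1 y2 y3 y4 : closed_chain y0 y1 y2 y3 y4 ->
  exists (j : Z) z0 z1 z2 z3 z4,
    closed_chain z0 z1 z2 z3 z4 /\ crossing (/4 + IZR j * /2) z0 z1 z2 z3 z4.
Proof.
  intro Hc. destruct (archimed (2 * y0 - /2)) as [Hup1 Hup2].
  set (j := up (2 * y0 - /2)) in *.
  pose proof (closed_chain_rotate _ _ _ _ _ Hc) as Hc1.
  pose proof (closed_chain_rotate _ _ _ _ _ Hc1) as Hc2.
  pose proof (closed_chain_rotate _ _ _ _ _ Hc2) as Hc3.
  pose proof (closed_chain_rotate _ _ _ _ _ Hc3) as Hc4.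
  pose proof Hc as (? & ? & ? & ? & ? & _).
  (* five steps of length at most 1/2 cover a length 2, so at most one step misses a point
     of the grid *)
  destruct (Rlt_le_dec y1 (/4 + IZR j * /2)).
  { exists j. do 5 eexists. split; [exact Hc1 | unfold crossing; lra]. }
  destruct (Rlt_le_dec y2 (/4 + IZR (j + 1) * /2)).
  { exists (j + 1)%Z. do 5 eexists. split; [exact Hc2 | unfold crossing; rewrite plus_IZR in *; lra]. }
  destruct (Rlt_le_dec y3 (/4 + IZR (j + 2) * /2)).
  { exists (j + 2)%Z. do 5 eexists. split; [exact Hc3 | unfold crossing; rewrite plus_IZR in *; lra]. }
  destruct (Rlt_le_dec y4 (/4 + IZR (j + 3) * /2)).
  { exists (j + 3)%Z. do 5 eexists. split; [exact Hc4 | unfold crossing; rewrite plus_IZR in *; lra]. }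
  exists j. do 5 eexists. split; [exact Hc | unfold crossing; rewrite !plus_IZR in *; lra].
Qed.

Lemma closed_chain_normal_form y0 y1 y2 y3 y4 : closed_chain y0 y1 y2 y3 y4 ->
  exists z0 z1 z2 z3 z4, closed_chain z0 z1 z2 z3 z4 /\
    (crossing (/4) z0 z1 z2 z3 z4 \/ crossing (3/4) z0 z1 z2 z3 z4).
Proof.
  intro Hc.
  destruct (closed_chain_crossing _ _ _ _ _ Hc) as (j & z0 & z1 & z2 & z3 & z4 & Hz & Hcr).
  destruct (Z.Even_or_Odd j) as [[n Hn] | [n Hn]];
    exists (z0 + IZR (- n)), (z1 + IZR (- n)), (z2 + IZR (- n)), (z3 + IZR (- n)), (z4 + IZR (- n));
    (split; [apply closed_chain_add_Z; assumption |]);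
    unfold crossing in *; rewrite Hn, ?plus_IZR, mult_IZR, opp_IZR in *; simpl in *; lra.
Qed.

End ClosedChain.

(** * The triangle with vertices (0, t), (0, -t), (r, 0) *)

Lemma contraction_ratio_bounds t : 4/5 < t < 1 ->
  0 < (1 - t) / (1 + t) <= /9 /\ (t - 1) / (t + 1) = - ((1 - t) / (1 + t)).
Proof.
  intro Ht. repeat split.
  - apply Rdiv_lt_0_compat; lra.
  - apply (Rmult_le_reg_r (1 + t)); [lra |]. unfold Rdiv. rewrite Rmult_assoc, Rinv_l; lra.
  - field. lra.
Qed.

Lemma axis_vertices_in_open_disk t r : -1 < t < 1 -> -1 < r < 1 ->
  in_open_disk (0, t) /\ in_open_disk (0, - t) /\ in_open_disk (r, 0).
Proof. intros. unfold in_open_disk; simpl. repeat split; nra. Qed.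

Lemma admissible_step_le_half t r x y :
  admissible (0, t) (0, - t) (r, 0) x y -> 0 <= y - x < 1 -> y - x <= /2.
Proof.
  intros Hadm Hxy.
  pose proof (Hadm _ (or_introl eq_refl)) as HP.
  pose proof (Hadm _ (or_intror (or_introl eq_refl))) as HQ.
  rewrite chord_form_half_pt in HP, HQ. simpl in HP, HQ.
  (* the two chord forms of the symmetric pair [(0, t)], [(0, -t)] add up to [2 cos (PI (y - x))] *)
  apply Rnot_lt_le. intro. pose proof PI_RGT_0.
  assert (cos (PI * (y - x)) < 0) by (apply cos_lt_0; nra).
  lra.
Qed.

Lemma no_crossing_chain_quarter t r z0 z1 z2 z3 z4 :
  4/5 < t < 1 -> -1 < r < (t - 1) / (t + 1) ->
  closed_chain (admissible (0, t) (0, - t) (r, 0)) z0 z1 z2 z3 z4 ->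
  crossing (/4) z0 z1 z2 z3 z4 -> False.
Proof.
  intros Ht Hr (? & ? & ? & ? & ? & A01 & A12 & A23 & A34 & _) Hcr. unfold crossing in Hcr.
  destruct (contraction_ratio_bounds t Ht) as [Hk Ek]. rewrite Ek in Hr.
  pose proof (south_north_chord_tan (r, 0) (-1) z0 z1 (z0 + /4) (z1 - /4) ltac:(lra) ltac:(lra)
    ltac:(lra) ltac:(lra) (A01 _ (or_intror (or_intror eq_refl)))) as R01.
  pose proof (north_south_chord_tan (0, - t) 0 z1 z2 (z1 - /4) (z2 - 3/4) ltac:(lra) ltac:(lra)
    ltac:(lra) ltac:(lra) (A12 _ (or_intror (or_introl eq_refl)))) as Q12.
  pose proof (south_north_chord_tan (0, t) 0 z2 z3 (z2 - 3/4) (z3 - 5/4) ltac:(lra) ltac:(lra)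
    ltac:(lra) ltac:(lra) (A23 _ (or_introl eq_refl))) as P23.
  pose proof (north_south_chord_tan (r, 0) 1 z3 z4 (z3 - 5/4) (z4 - 7/4) ltac:(lra) ltac:(lra)
    ltac:(lra) ltac:(lra) (A34 _ (or_intror (or_intror eq_refl)))) as R34.
  simpl in R01, Q12, P23, R34.
  apply (tan_chain_short_absurd ((1 - t) / (1 + t)) (- r)
    (tan (PI * (z0 + /4))) (tan (PI * (z1 - /4))) (tan (PI * (z2 - 3/4)))
    (tan (PI * (z3 - 5/4))) (tan (PI * (z4 - 7/4)))); try lra.
  - apply tan_PI_nonneg; lra.
  - apply tan_PI_nonneg; lra.
  - apply tan_contract; lra.
  - apply tan_contract; lra.
Qed.

Lemma no_crossing_chain_three_quarters t r z0 z1 z2 z3 z4 :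
  4/5 < t < 1 -> -1 < r < (t - 1) / (t + 1) ->
  closed_chain (admissible (0, t) (0, - t) (r, 0)) z0 z1 z2 z3 z4 ->
  crossing (3/4) z0 z1 z2 z3 z4 -> False.
Proof.
  intros Ht Hr (? & ? & ? & ? & ? & A01 & A12 & A23 & A34 & A40) Hcr. unfold crossing in Hcr.
  destruct (contraction_ratio_bounds t Ht) as [Hk Ek]. rewrite Ek in Hr.
  pose proof (north_south_chord_tan (0, - t) 0 z0 z1 (z0 - /4) (z1 - 3/4) ltac:(lra) ltac:(lra)
    ltac:(lra) ltac:(lra) (A01 _ (or_intror (or_introl eq_refl)))) as Q01.
  pose proof (south_north_chord_tan (0, t) 0 z1 z2 (z1 - 3/4) (z2 - 5/4) ltac:(lra) ltac:(lra)
    ltac:(lra) ltac:(lra) (A12 _ (or_introl eq_refl))) as P12.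
  pose proof (south_north_chord_tan (r, 0) 0 z1 z2 (z1 - 3/4) (z2 - 5/4) ltac:(lra) ltac:(lra)
    ltac:(lra) ltac:(lra) (A12 _ (or_intror (or_intror eq_refl)))) as R12.
  pose proof (north_south_chord_tan (0, - t) 1 z2 z3 (z2 - 5/4) (z3 - 7/4) ltac:(lra) ltac:(lra)
    ltac:(lra) ltac:(lra) (A23 _ (or_intror (or_introl eq_refl)))) as Q23.
  pose proof (north_south_chord_tan (r, 0) 1 z2 z3 (z2 - 5/4) (z3 - 7/4) ltac:(lra) ltac:(lra)
    ltac:(lra) ltac:(lra) (A23 _ (or_intror (or_intror eq_refl)))) as R23.
  pose proof (south_north_chord_tan (0, t) 1 z3 z4 (z3 - 7/4) (z4 - 9/4) ltac:(lra) ltac:(lra)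
    ltac:(lra) ltac:(lra) (A34 _ (or_introl eq_refl))) as P34.
  pose proof (north_north_chord_tan (r, 0) 2 z4 (z0 + 2) (z4 - 9/4) (z0 - /4) ltac:(lra) ltac:(lra)
    ltac:(lra) ltac:(lra) (A40 _ (or_intror (or_intror eq_refl)))) as R40.
  simpl in Q01, P12, R12, Q23, R23, P34, R40.
  apply (tan_chain_long_absurd ((1 - t) / (1 + t)) (- r)
    (tan (PI * (z0 - /4))) (tan (PI * (z1 - 3/4))) (tan (PI * (z2 - 5/4)))
    (tan (PI * (z3 - 7/4))) (tan (PI * (z4 - 9/4)))); try lra.
  - apply tan_PI_nonneg; lra.
  - apply tan_PI_nonneg; lra.
  - apply tan_PI_nonneg; lra.
  - apply tan_contract; lra.
  - apply tan_contract; lra.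
  - apply tan_contract; lra.
  - apply tan_contract; lra.
Qed.

Lemma no_closed_chain t r y0 y1 y2 y3 y4 : 4/5 < t < 1 -> -1 < r < (t - 1) / (t + 1) ->
  closed_chain (admissible (0, t) (0, - t) (r, 0)) y0 y1 y2 y3 y4 -> False.
Proof.
  intros Ht Hr Hc.
  destruct (closed_chain_normal_form _ (admissible_add_Z _ _ _) _ _ _ _ _ Hc)
    as (z0 & z1 & z2 & z3 & z4 & Hz & [Hcr | Hcr]).
  - exact (no_crossing_chain_quarter t r _ _ _ _ _ Ht Hr Hz Hcr).
  - exact (no_crossing_chain_three_quarters t r _ _ _ _ _ Ht Hr Hz Hcr).
Qed.

Lemma psi_lift_iter5_lt t r y : 4/5 < t < 1 -> -1 < r < (t - 1) / (t + 1) ->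
  Nat.iter 5 (psi_lift (0, t) (0, - t) (r, 0)) y < y + 2.
Proof.
  intros Ht Hr. destruct (contraction_ratio_bounds t Ht) as [Hk Ek].
  destruct (axis_vertices_in_open_disk t r ltac:(lra) ltac:(rewrite Ek in Hr; lra))
    as (HP & HQ & HR).
  set (G := psi_lift (0, t) (0, - t) (r, 0)).
  assert (Hstep : forall z, admissible (0, t) (0, - t) (r, 0) z (G z) /\ z <= G z <= z + /2).
  { intro z. pose proof (admissible_psi_lift _ _ _ HP HQ HR z) as Hadm.
    pose proof (psi_lift_sub (0, t) (0, - t) (r, 0) z) as Hsub. fold G in Hsub.
    pose proof (admissible_step_le_half t r z (G z) Hadm ltac:(lra)).
    split; [assumption | lra]. }
  apply Rnot_le_lt. intro Hge.
  destruct (Hstep y) as [A1 B1]. destruct (Hstep (G y)) as [A2 B2].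
  destruct (Hstep (G (G y))) as [A3 B3]. destruct (Hstep (G (G (G y)))) as [A4 B4].
  destruct (Hstep (G (G (G (G y))))) as [A5 B5]. simpl in Hge.
  apply (no_closed_chain t r y (G y) (G (G y)) (G (G (G y))) (G (G (G (G y)))) Ht Hr).
  repeat split; try lra; try assumption.
  apply admissible_sub_right with (G (G (G (G (G y))))); try assumption; lra.
Qed.

Theorem lemma6p16 (t r' : R) :
  8/10 < t < 1 -> -1 < r' < (t - 1) / (t + 1) ->
  let U := filled_triangle (pair 0 t) (pair 0 (- t)) (pair r' 0) in
  (exists F, is_psi_lift U F) /\
  (forall F, is_psi_lift U F -> forall x : R,
     exists rho, Un_cv (fun n => (Nat.iter n F x - x) / INR n) rho /\ rho < 2/5).
Proof.
  intros Ht Hr U.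
  assert (Ht' : 4/5 < t < 1) by lra.
  destruct (contraction_ratio_bounds t Ht') as [Hk Ek].
  destruct (axis_vertices_in_open_disk t r' ltac:(lra) ltac:(rewrite Ek in Hr; lra))
    as (HP & HQ & HR).
  split.
  - exists (psi_lift (0, t) (0, - t) (r', 0)). apply is_psi_lift_psi_lift; assumption.
  - intros F HF x. rewrite (lift_eq_psi_lift _ _ _ HP HQ HR F HF).
    destruct (rotation_number_exists _ (psi_lift_add1 _ _ _)
      (psi_lift_nondecreasing _ _ _ HP HQ HR) x) as [rho Hrho].
    exists rho. split; [exact Hrho |].
    pose proof (rotation_number_lt _ (psi_lift_add1 _ _ _) (psi_lift_continuous _ _ _ HP HQ HR)
      2 5 x rho ltac:(lia) (fun y => psi_lift_iter5_lt t r' y Ht' Hr) Hrho).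
    simpl INR in *. lra.
Qed.
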